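(* Let $H$ be a graph and let $A, B \subseteq V(H)$ be disjoint such that $(H,A,B)$ has property $\mathcal{P}$. Let $H^*\coloneqq H - E_H(A,B)$, $A' \coloneqq \{x \in A \colon d_{H}(x) \geq 4\}$ and $B' \coloneqq N_H(A \setminus A')$. Then $S(H) = (S(H^* ) \setminus B') \cup A'$, $P(H) = P(H^* ) \cup B'$, and $R(H) = R(H^* ) \setminus A'$.
   Context: For a graph $G$ and $X\subseteq V(G)$, $N_G(X)=\{x\in V(G)\setminus X: xy\in E(G)\text{ for some }y\in X\}$, $N_G(x)=N_G(\{x\})$, $d_G(x)$ is the degree, $\mathrm{dist}_G$ is graph distance; $E_G(X)$ is the set of edges inside $X$, $E_G(X,Y)$ the set of edges with one endpoint in $X$ and the other in $Y$, and $G-E'$ deletes the edge set $E'$. The strong $4$-core $S(G)$ is the maximal $X\subseteq V(G)$ with $|N_G(x)\cap X|\geq 4$ for all $x\in X\cup N_G(X)$; $P(G)=N_G(S(G))$ and $R(G)=V(G)\setminus(S(G)\cup P(G))$. A set $B$ has the robust sapphire property for $G$ if (RS1) every $x\in B\cup N_G(B)$ satisfies $\{x\}\cup N_G(x)\subseteq S(G)$ and $d_G(x)\ge5$, and (RS2) distinct $b_1,b_2\in B$ satisfy $\mathrm{dist}_G(b_1,b_2)\ge5$. For a graph $H$ and disjoint $A,B\subseteq V(H)$, with $H^*=H-E_H(A,B)$, $(H,A,B)$ has property $\mathcal{P}$ if: (P1) $E_H(A)=E_H(B)=\varnothing$; (P2) $H[A\cup B]$ is a union of stars and $|N_H(b)\cap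 A|\le 1$ for each $b\in B$; (P3) every vertex of $A$ is isolated in $H^*$; (P4) $B$ has the robust sapphire property for $H^*$. *)

From mathcomp Require Import all_boot.
Set Implicit Arguments. Unset Strict Implicit. Unset Printing Implicit Defensive.

Section Graphs.
Variable T : finType.

Definition simple_graph (e : rel T) : Prop := symmetric e /\ irreflexive e.

Definition nbhs (e : rel T) (X : {set T}) : {set T} :=
  [set x | (x \notin X) && [exists y in X, e x y]].

Definition nbh (e : rel T) (x : T) : {set T} := nbhs e [set x].

Definition deg (e : rel T) (x : T) : nat := #|nbh e x|.

(* dist_G(x,y) >= k : every walk from x to y has length at least k
   (distance +infinity if there is no such walk). *)
Definition dist_ge (e : rel T) (x y : T) (k : nat) : Prop :=
  forall p : seq T, path e x p -> last x p = y -> k <= size p.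

Definition edge_between (X Y : {set T}) (x y : T) : bool :=
  ((x \in X) && (y \in Y)) || ((x \in Y) && (y \in X)).

Definition del_edges (e : rel T) (X Y : {set T}) : rel T :=
  fun x y => e x y && ~~ edge_between X Y x y.

Definition core4_ok (e : rel T) (X : {set T}) : bool :=
  [forall x in X :|: nbhs e X, 4 <= #|nbh e x :&: X|].

(* S(G): the maximal such X (the union of all of them; the family is
   closed under union, so this is its largest member) *)
Definition S4 (e : rel T) : {set T} := \bigcup_(X | core4_ok e X) X.
Definition P4 (e : rel T) : {set T} := nbhs e (S4 e).
Definition R4 (e : rel T) : {set T} := ~: (S4 e :|: P4 e).

Definition robust_sapphire (e : rel T) (B : {set T}) : Prop :=
  (forall x, x \in B :|: nbhs e B ->
     (x |: nbh e x) \subset S4 e /\ 5 <= deg e x) /\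
  (forall b1 b2, b1 \in B -> b2 \in B -> b1 != b2 -> dist_ge e b1 b2 5).

Definition induced (e : rel T) (U : {set T}) : rel T :=
  fun x y => [&& x \in U, y \in U & e x y].

(* G[U] is a union of stars: every connected component C of G[U] contains
   a centre c such that every edge of G[U] inside C is incident to c
   (a single vertex counts as a trivial star K_{1,0}). *)
Definition union_of_stars (e : rel T) (U : {set T}) : Prop :=
  forall x, x \in U ->
    let C := [set y | connect (induced e U) x y] in
    exists2 c, c \in C &
      forall y z, y \in C -> z \in C -> induced e U y z -> (y == c) || (z == c).

Definition propP (e : rel T) (A B : {set T}) : Prop :=
  let Hs := del_edges e A B in
  [/\ (forall x y, x \in A -> y \in A -> ~~ e x y) /\
      (forall x y, x \in B -> y \in B -> ~~ e x y),
      union_of_stars e (A :|: B) /\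
      (forall b, b \in B -> #|nbh e b :&: A| <= 1),
      (forall a y, a \in A -> ~~ Hs a y)
    & robust_sapphire Hs B].

End Graphs.

From mathcomp Require Import all_boot.
Set Implicit Arguments. Unset Strict Implicit. Unset Printing Implicit Defensive.

(* Every edge at a vertex of A goes to B, and every vertex of B has at most
   one neighbour in A, so H is H* with the (isolated) vertices of A attached
   to B.  A vertex of A enters the core iff it has degree at least 4 (the
   set A'); the B-neighbours of the remaining vertices of A (the set B')
   must leave it, since such a low-degree neighbour would otherwise need 4
   core neighbours.  Removing B' costs each vertex near B at most one core
   neighbour, because B is 5-dispersed in H*, and these vertices have degree
   at least 5 in H*; so removing B' from the core of H* and adding A' gives
   a strong 4-core of H.  Conversely, S(H) - A together with the core of H*
   is a strong 4-core of H*, which gives the other inclusion. *)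

Section StrongCore.
Variables (T : finType) (e : rel T).

Lemma in_nbhs (X : {set T}) x : (x \in nbhs e X) = (x \notin X) && [exists y in X, e x y].
Proof. by rewrite /nbhs inE. Qed.

Lemma in_nbh x y : (y \in nbh e x) = (y != x) && e y x.
Proof.
rewrite /nbh in_nbhs in_set1; congr andb; apply/existsP/idP.
  by case=> z /andP[/set1P ->].
by move=> eyx; exists x; rewrite set11 eyx.
Qed.

Lemma in_nbhs_card (X : {set T}) x :
  symmetric e -> x \notin X -> 0 < #|nbh e x :&: X| -> x \in nbhs e X.
Proof.
move=> e_sym xX /card_gt0P[y]; rewrite in_setI in_nbh => /andP[/andP[_ eyx] yX].
by rewrite in_nbhs xX; apply/exists_inP; exists y; rewrite // e_sym.
Qed.

Lemma sub_S4 (X : {set T}) : core4_ok e X -> X \subset S4 e.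
Proof. exact: bigcup_sup. Qed.

Lemma core4_ok_S4 : core4_ok e (S4 e).
Proof.
apply/forall_inP => x xSN.
have [X coreX xXN] : exists2 X, core4_ok e X & x \in X :|: nbhs e X.
  case/setUP: xSN => [/bigcupP[X coreX xX] | ].
    by exists X; rewrite // in_setU xX.
  rewrite in_nbhs => /andP[xS /exists_inP[y /bigcupP[X coreX yX] exy]].
  exists X; rewrite // in_setU in_nbhs; apply/orP; right; apply/andP; split.
    by apply: contra xS => xX; apply/bigcupP; exists X.
  by apply/exists_inP; exists y.
apply: leq_trans (forall_inP coreX x xXN) _.
exact/subset_leq_card/setIS/sub_S4.
Qed.

Lemma card_nbh_S4 x :
  x \in S4 e :|: nbhs e (S4 e) -> 4 <= #|nbh e x :&: S4 e|.
Proof. exact: (forall_inP core4_ok_S4). Qed.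

Lemma deg_S4 x : x \in S4 e :|: nbhs e (S4 e) -> 4 <= deg e x.
Proof. by move/card_nbh_S4/leq_trans; apply; apply/subset_leq_card/subsetIl. Qed.

End StrongCore.

Section DeleteEdges.
Variables (T : finType) (e : rel T).

Lemma del_edgesW (X Y : {set T}) x y : del_edges e X Y x y -> e x y.
Proof. by rewrite /del_edges => /andP[]. Qed.

Lemma del_edges_sym (X Y : {set T}) : symmetric e -> symmetric (del_edges e X Y).
Proof.
by move=> e_sym x y; rewrite /del_edges /edge_between e_sym orbC
  [(y \in X) && _]andbC [(y \in Y) && _]andbC.
Qed.

Lemma del_edges_notin (X Y : {set T}) x y :
  x \notin X -> y \notin X -> del_edges e X Y x y = e x y.
Proof.
by move=> /negbTE xX /negbTE yX; rewrite /del_edges /edge_between xX yX andbF andbT.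
Qed.

Lemma nbh_del_edges (X Y : {set T}) x : nbh (del_edges e X Y) x \subset nbh e x.
Proof. by apply/subsetP => y; rewrite !in_nbh => /andP[-> /del_edgesW]. Qed.

End DeleteEdges.

Section PropertyP.
Variables (T : finType) (e : rel T) (A B : {set T}).
Hypotheses (e_sym : symmetric e) (e_irr : irreflexive e).
Hypothesis disjAB : [disjoint A & B].
Hypothesis A_isolated : forall a y, a \in A -> ~~ del_edges e A B a y.
Hypothesis B_le1_A : forall b, b \in B -> #|nbh e b :&: A| <= 1.
Hypothesis B_sapphire : robust_sapphire (del_edges e A B) B.

Local Notation Hs := (del_edges e A B).
Local Notation SH := (S4 Hs).
Local Notation A' := [set x in A | 4 <= deg e x].
Local Notation B' := (nbhs e (A :\: A')).
Local Notation W := (B :|: nbhs Hs B).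
Local Notation X := ((SH :\: B') :|: A').

Let Hs_sym : symmetric Hs := del_edges_sym A B e_sym.

Lemma Hs_nbr_notin_A x y : Hs x y -> x \notin A.
Proof. by apply: contraL; apply: A_isolated. Qed.

Lemma A_nbr_in_B a y : a \in A -> e a y -> y \in B.
Proof.
move=> aA eay; have := A_isolated y aA.
by rewrite /del_edges eay /edge_between aA (disjointFr disjAB aA) /= orbF negbK.
Qed.

Lemma B_A_nbr_uniq b a1 a2 :
  b \in B -> a1 \in A -> a2 \in A -> e b a1 -> e b a2 -> a1 = a2.
Proof.
move=> bB a1A a2A eba1 eba2.
have nbhA a : a \in A -> e b a -> a \in nbh e b :&: A.
  move=> aA eba; rewrite in_setI in_nbh aA [e a b]e_sym eba !andbT.
  by apply: contraTneq eba => ->; rewrite e_irr.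
exact: (card_le1_eqP (B_le1_A bB)) (nbhA _ a2A eba2) (nbhA _ a1A eba1).
Qed.

Lemma Hs_B_nbr_uniq x b1 b2 : b1 \in B -> b2 \in B -> Hs x b1 -> Hs x b2 -> b1 = b2.
Proof.
move=> b1B b2B xb1 xb2; apply/eqP/negPn/negP => b12.
have walk : path Hs b1 [:: x; b2] by rewrite /= Hs_sym xb1 xb2.
by have := B_sapphire.2 b1 b2 b1B b2B b12 _ walk erefl.
Qed.

Lemma Hs_B_nbr_in_W x b : b \in B -> Hs x b -> x \in W.
Proof.
move=> bB xb; rewrite in_setU in_nbhs; case: (x \in B) => //=.
by apply/exists_inP; exists b.
Qed.

Lemma B_sub_SH : B \subset SH.
Proof.
apply/subsetP => b bB; have bW : b \in W by rewrite in_setU bB.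
by have [/subsetP sub _] := B_sapphire.1 b bW; apply: sub; rewrite setU11.
Qed.

Lemma A_notin_SH a : a \in A -> a \notin SH.
Proof.
move=> aA; apply/negP => aS.
have : 4 <= deg Hs a by apply: deg_S4; rewrite in_setU aS.
rewrite /deg; suff -> : nbh Hs a = set0 by rewrite cards0.
apply/setP => y; rewrite in_nbh in_set0 Hs_sym.
by rewrite (negbTE (A_isolated y aA)) andbF.
Qed.

Lemma B'_sub_B : B' \subset B.
Proof.
apply/subsetP => y; rewrite in_nbhs => /andP[_ /exists_inP[a /setDP[aA _] eya]].
by apply: (A_nbr_in_B aA); rewrite e_sym.
Qed.

Lemma A_nbr_in_B' a y : a \in A -> a \notin A' -> e a y -> y \in B'.
Proof.
move=> aA aA' eay; rewrite in_nbhs; apply/andP; split.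
  apply: contraL (A_nbr_in_B aA eay) => /setDP[yA _].
  by rewrite (disjointFr disjAB yA).
by apply/exists_inP; exists a; rewrite ?in_setD ?aA ?aA' // e_sym.
Qed.

Lemma notA_in_X x : x \notin A -> (x \in X) = (x \notin B') && (x \in SH).
Proof. by move=> /negbTE xA; rewrite in_setU in_setD inE xA orbF. Qed.

Lemma B'_notin_X y : y \in B' -> y \notin X.
Proof.
move=> yB'; have yA : y \notin A.
  by rewrite (disjointFl disjAB (subsetP B'_sub_B y yB')).
by rewrite notA_in_X // yB'.
Qed.

Lemma card_nbh_W x : x \in W -> 4 <= #|nbh Hs x :&: (SH :\: B')|.
Proof.
move=> xW; have [nbhS deg5] := B_sapphire.1 x xW.
have le1 : #|nbh Hs x :&: B'| <= 1.
  apply/card_le1_eqP => y1 y2; rewrite !in_setI !in_nbh.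
  move=> /andP[/andP[_ y1x] /(subsetP B'_sub_B) y1B].
  move=> /andP[/andP[_ y2x] /(subsetP B'_sub_B) y2B].
  by rewrite Hs_sym in y1x; rewrite Hs_sym in y2x; apply: Hs_B_nbr_uniq y2x y1x.
have -> : nbh Hs x :&: (SH :\: B') = nbh Hs x :\: B'.
  by rewrite setIDA (setIidPl _) //; apply: subset_trans nbhS; apply: subsetUr.
by rewrite cardsD (leq_sub deg5 le1).
Qed.

Lemma card_nbh_X x : x \notin A -> x \in SH :|: nbhs Hs SH -> 4 <= #|nbh e x :&: X|.
Proof.
move=> xA xSN; case xW: (x \in W).
  apply: leq_trans (card_nbh_W xW) (subset_leq_card _).
  by apply: setISS; [apply: nbh_del_edges | apply: subsetUl].
apply: leq_trans (card_nbh_S4 xSN) (subset_leq_card _).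
apply/subsetP => y; rewrite !in_setI !in_nbh => /andP[/andP[yx Hyx] yS].
rewrite yx (del_edgesW Hyx) in_setU in_setD yS !andbT /=; apply/orP; left.
apply: contraFN _ xW => /(subsetP B'_sub_B) yB.
by apply: (Hs_B_nbr_in_W yB); rewrite Hs_sym.
Qed.

Lemma nbh_A'_sub_X a : a \in A' -> nbh e a \subset X.
Proof.
move=> aA'; have aA : a \in A by move: aA'; rewrite inE => /andP[].
apply/subsetP => y; rewrite in_nbh => /andP[_ eya].
have yB : y \in B by apply: (A_nbr_in_B aA); rewrite e_sym.
rewrite in_setU in_setD (subsetP B_sub_SH y yB) andbT; apply/orP; left.
rewrite in_nbhs; apply/negP => /andP[_ /exists_inP[a2 /setDP[a2A a2A'] eya2]].
by move: a2A'; rewrite (B_A_nbr_uniq yB a2A aA eya2 eya) aA'.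
Qed.

Lemma core_region_A x : x \in A -> x \in X :|: nbhs e X -> x \in A'.
Proof.
move=> xA /setUP[|].
  by rewrite in_setU in_setD (negbTE (A_notin_SH xA)) andbF.
rewrite in_nbhs => /andP[_ /exists_inP[y yX exy]]; apply/negPn/negP => xA'.
by move: yX; rewrite (negbTE (B'_notin_X (A_nbr_in_B' xA xA' exy))).
Qed.

Lemma core_region_notA x :
  x \notin A -> x \in X :|: nbhs e X -> x \in SH :|: nbhs Hs SH.
Proof.
move=> xA /setUP[|].
  by rewrite notA_in_X // in_setU => /andP[_ ->].
rewrite in_nbhs => /andP[_ /exists_inP[y yX exy]].
rewrite in_setU in_nbhs; case xS: (x \in SH) => //=.
have yA : y \notin A.
  apply: contraFN _ xS => yA; apply: (subsetP B_sub_SH).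
  by apply: (A_nbr_in_B yA); rewrite e_sym.
apply/exists_inP; exists y; first by move: yX; rewrite notA_in_X // => /andP[].
by rewrite del_edges_notin.
Qed.

Lemma X_core : core4_ok e X.
Proof.
apply/forall_inP => x xXN; case: (boolP (x \in A)) => [xA | xnA].
  have xA' := core_region_A xA xXN.
  by rewrite (setIidPl (nbh_A'_sub_X xA')); move: xA'; rewrite inE => /andP[].
exact: card_nbh_X xnA (core_region_notA xnA xXN).
Qed.

Lemma S4_notA_core : core4_ok Hs ((S4 e :\: A) :|: SH).
Proof.
apply/forall_inP => x xZN.
case: (boolP (x \in SH :|: nbhs Hs SH)) => [xSN | ].
  exact: leq_trans (card_nbh_S4 xSN) (subset_leq_card (setIS _ (subsetUr _ _))).
rewrite in_setU negb_or => /andP[xS xNS].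
have [xA xYN] : x \notin A /\ x \in S4 e :|: nbhs e (S4 e).
  case/setUP: xZN.
    by rewrite in_setU in_setD (negbTE xS) orbF in_setU => /andP[-> ->].
  rewrite in_nbhs => /andP[_ /exists_inP[y yZ xy]].
  have yS : y \notin SH.
    by apply: contra xNS => yS; rewrite in_nbhs xS; apply/exists_inP; exists y.
  move: yZ; rewrite in_setU in_setD (negbTE yS) orbF => /andP[_ yY].
  split; first exact: Hs_nbr_notin_A xy.
  rewrite in_setU in_nbhs; case: (x \in S4 e) => //=.
  by apply/exists_inP; exists y => //; apply: del_edgesW xy.
apply: leq_trans (card_nbh_S4 xYN) (subset_leq_card _).
apply/subsetP => y; rewrite !in_setI !in_nbh => /andP[/andP[yx eyx] yY].
have yA : y \notin A.
  by apply: contra xS => yA; apply: (subsetP B_sub_SH); apply: A_nbr_in_B yA eyx.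
by rewrite yx del_edges_notin // eyx in_setU in_setD yA yY.
Qed.

Lemma S4_sub_X : S4 e \subset X.
Proof.
have YS : S4 e :\: A \subset SH.
  by apply: subset_trans (sub_S4 S4_notA_core); apply: subsetUl.
apply/subsetP => y yY; case: (boolP (y \in A)) => [yA | ynA].
  by rewrite in_setU inE yA deg_S4 ?orbT // in_setU yY.
rewrite notA_in_X // (subsetP YS) ?in_setD ?ynA ?yY // andbT.
rewrite in_nbhs; apply/negP => /andP[_ /exists_inP[a /setDP[aA aA'] eya]].
apply/negP: aA'; rewrite inE aA deg_S4 // in_setU in_nbhs.
by case: (a \in S4 e) => //=; apply/exists_inP; exists y; rewrite // e_sym.
Qed.

Lemma S4_eq : S4 e = X.
Proof. by apply/eqP; rewrite eqEsubset S4_sub_X sub_S4 // X_core. Qed.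

Lemma nbhs_X_sub : nbhs e X \subset P4 Hs :|: B'.
Proof.
apply/subsetP => x xN; have xXN : x \in X :|: nbhs e X by rewrite in_setU xN orbT.
have xX : x \notin X by move: xN; rewrite in_nbhs => /andP[].
rewrite in_setU orbC; case: (boolP (x \in B')) => //= xB'.
have xA : x \notin A.
  by apply: contra xX => xA; rewrite in_setU (core_region_A xA xXN) orbT.
have /setUP[xS|//] := core_region_notA xA xXN.
by move: xX; rewrite notA_in_X // xB' xS.
Qed.

Lemma sub_nbhs_X : P4 Hs :|: B' \subset nbhs e X.
Proof.
apply/subsetP => x xPB.
have [xA xSN] : x \notin A /\ x \in SH :|: nbhs Hs SH.
  case/setUP: xPB => [xP | /(subsetP B'_sub_B) xB].
    split; last by rewrite in_setU xP orbT.
    by move: xP; rewrite in_nbhs => /andP[_ /exists_inP[y _ /Hs_nbr_notin_A]].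
  by rewrite (disjointFl disjAB xB) in_setU (subsetP B_sub_SH x xB).
have xX : x \notin X.
  case/setUP: xPB => [xP | /B'_notin_X //].
  move: xP; rewrite in_nbhs => /andP[/negbTE xS _].
  by rewrite notA_in_X // xS andbF.
exact: in_nbhs_card e_sym xX (leq_trans _ (card_nbh_X xA xSN)).
Qed.

Lemma P4_eq : P4 e = P4 Hs :|: B'.
Proof. by rewrite /P4 S4_eq; apply/eqP; rewrite eqEsubset nbhs_X_sub sub_nbhs_X. Qed.

Lemma R4_eq : R4 e = R4 Hs :\: A'.
Proof.
rewrite /R4 P4_eq S4_eq; apply/setP => x; rewrite !(in_setC, in_setD, in_setU).
have := subsetP (subset_trans B'_sub_B B_sub_SH) x.
by case: (x \in B'); case: (x \in SH); case: (x \in A'); case: (x \in P4 Hs);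
  rewrite //= => /(_ isT).
Qed.

End PropertyP.

Theorem proposition6p6 (T : finType) (e : rel T) (A B : {set T}) :
  simple_graph e ->
  [disjoint A & B] ->
  propP e A B ->
  let Hs := del_edges e A B in
  let A' := [set x in A | 4 <= deg e x] in
  let B' := nbhs e (A :\: A') in
  [/\ S4 e = (S4 Hs :\: B') :|: A',
      P4 e = P4 Hs :|: B'
    & R4 e = R4 Hs :\: A'].
Proof.
move=> [e_sym e_irr] disjAB [_ [_ B_le1_A] A_isolated B_sapphire] Hs A' B'.
by split; [exact: S4_eq | exact: P4_eq | exact: R4_eq].
Qed.
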